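(* For every $j\ge0$, $$\left|\frac{\mathbb E(W_j^+)}{K}-\sum_{\ell\ge j}\mathbb Q_\ell\right|\le \mathbb E\!\left(\min(pv_1,1)\,\frac{v_1}{V}\right).$$
   Context: Uniform urn model. Let $v$ be a random variable with values in the positive integers, let $K\ge 1$, let $v_1,\dots,v_K$ be i.i.d. copies of $v$ and $V=v_1+\dots+v_K$. Fix $p\in(0,1)$, with $pV$ assumed to be an integer. Conditionally on $\mathcal F=\{v_1,\dots,v_K\}$, $pV$ balls are drawn with replacement, independently, each drawn ball having color $i$ with probability $v_i/V$. Let $\tilde v_i$ be the number of drawn balls of color $i$, and for $j\ge0$ let $W_j^+=\sum_{i=1}^K\mathbf 1\{\tilde v_i\ge j\}$. Let $\mathbb Q_j=\mathbb E\big(\frac{(pv)^j}{j!}e^{-pv}\big)$, $j\ge0$. *)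

From Stdlib Require Import Reals Lra List Arith ClassicalEpsilon.
Open Scope R_scope.

(* Value of a convergent series (sum_{n>=0} u n); 0 if it does not converge. *)
Definition series (u : nat -> R) : R :=
  match excluded_middle_informative (exists l, infinite_sum u l) with
  | left H => proj1_sig (constructive_indefinite_description _ H)
  | right _ => 0
  end.

(* Law of v: pi n = P(v = n); v takes values in the positive integers. *)
Definition is_pos_int_law (pi : nat -> R) : Prop :=
  (forall n, 0 <= pi n) /\ pi 0%nat = 0 /\ infinite_sum pi 1.

(* E f(v_1,...,v_K) for i.i.d. v_i with law pi; f receives [v_1; ...; v_K]. *)
Fixpoint Eiid (pi : nat -> R) (K : nat) (f : list nat -> R) : R :=
  match K with
  | O => f nil
  | S k => series (fun n => pi n * Eiid pi k (fun l => f (n :: l)))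
  end.

Definition sumV (vs : list nat) : nat := fold_right Nat.add 0%nat vs.

(* number of drawn balls pV (pV is assumed to be an integer) *)
Definition ndraws (p : R) (vs : list nat) : nat :=
  Z.to_nat (Int_part (p * INR (sumV vs))).

Fixpoint draw_seqs (K n : nat) : list (list nat) :=
  match n with
  | O => nil :: nil
  | S m => flat_map (fun c => map (cons c) (draw_seqs K m)) (seq 0 K)
  end.

(* probability of a given sequence of independent draws, color i w.p. v_i/V *)
Definition draw_prob (vs : list nat) (s : list nat) : R :=
  fold_right (fun c acc => INR (nth c vs 0%nat) / INR (sumV vs) * acc) 1 s.

Definition vtilde (s : list nat) (i : nat) : nat := count_occ Nat.eq_dec s i.

Definition Wplus (K j : nat) (s : list nat) : nat :=
  length (filter (fun i => Nat.leb j (vtilde s i)) (seq 0 K)).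

Definition condE_Wplus (p : R) (K j : nat) (vs : list nat) : R :=
  fold_right Rplus 0
    (map (fun s => draw_prob vs s * INR (Wplus K j s)) (draw_seqs K (ndraws p vs))).

Definition E_Wplus (pi : nat -> R) (p : R) (K j : nat) : R :=
  Eiid pi K (condE_Wplus p K j).

Definition Qlaw (pi : nat -> R) (p : R) (j : nat) : R :=
  series (fun n => pi n * ((p * INR n) ^ j / INR (fact j) * exp (- (p * INR n)))).

Definition E_rhs (pi : nat -> R) (p : R) (K : nat) : R :=
  Eiid pi K (fun vs => Rmin (p * INR (hd 0%nat vs)) 1 * (INR (hd 0%nat vs) / INR (sumV vs))).

From Stdlib Require Import Reals Lra Lia List ZArith ClassicalEpsilon FunctionalExtensionality.
Open Scope R_scope.

(* Conditionally on F = (v_1, ..., v_K), the number of drawn balls of colour i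
   is Binomial(pV, v_i / V), so E(W_j^+ | F) = sum_i P(Bin(pV, v_i/V) >= j).
   Stein's method for the Poisson tail set {k >= j} (the Barbour-Hall bound)
   compares each term with P(Poisson(p v_i) >= j) at cost
   (v_i/V) (1 - e^{-p v_i}) <= min(p v_i, 1) v_i / V.  Integrating over F,
   the Poisson terms average to K sum_{l>=j} Q_l (Tonelli) and, by
   exchangeability of the v_i, the error terms to K E(min(p v_1, 1) v_1 / V). *)


Fixpoint fsum (M : nat) (F : nat -> R) : R :=
  match M with O => 0 | S m => fsum m F + F m end.

Lemma fsum_ext M F G : (forall i, (i < M)%nat -> F i = G i) -> fsum M F = fsum M G.
Proof. induction M; intros H; simpl; auto. rewrite IHM, H; auto. Qed.

Lemma fsum_nonneg M F : (forall i, 0 <= F i) -> 0 <= fsum M F.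
Proof. intros H; induction M; simpl; [lra|]. specialize (H M); lra. Qed.

Lemma fsum_mono F a b : (forall i, 0 <= F i) -> (a <= b)%nat -> fsum a F <= fsum b F.
Proof. intros H Hab. induction Hab; [lra|]. simpl. specialize (H m); lra. Qed.

Lemma fsum_const M c : fsum M (fun _ => c) = INR M * c.
Proof. induction M; simpl fsum; [simpl; ring|]. rewrite IHM, S_INR. ring. Qed.

Lemma fsum_minus M F G : fsum M (fun i => F i - G i) = fsum M F - fsum M G.
Proof. induction M; simpl; [ring|]. rewrite IHM. ring. Qed.

Lemma fsum_scal_r M F d : fsum M (fun i => F i * d) = fsum M F * d.
Proof. induction M; simpl; [ring|]. rewrite IHM; ring. Qed.

Lemma fsum_abs M F G :
  (forall i, (i < M)%nat -> Rabs (F i) <= G i) -> Rabs (fsum M F) <= fsum M G.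
Proof.
  induction M; intros H; simpl; [rewrite Rabs_R0; lra|].
  eapply Rle_trans; [apply Rabs_triang|]. apply Rplus_le_compat; auto.
Qed.

Lemma fsum_shift n F : fsum (S n) F = F 0%nat + fsum n (fun i => F (S i)).
Proof. induction n; simpl in *; [ring|]. rewrite IHn. ring. Qed.

Lemma sum_f_R0_fsum (u : nat -> R) k : sum_f_R0 u k = fsum (S k) u.
Proof. induction k; cbn [sum_f_R0 fsum]; [ring|]. rewrite IHk; cbn [fsum]; ring. Qed.

Lemma fsum_select K (q : nat -> R) i X Y : (i < K)%nat ->
  fsum K (fun c => q c * (if Nat.eq_dec c i then X else Y)) = fsum K q * Y + q i * (X - Y).
Proof.
  induction K as [|K IHK]; intros Hi; [lia|]. simpl.
  destruct (Nat.eq_dec K i) as [->|E].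
  - rewrite (fsum_ext i _ (fun c => q c * Y)).
    + rewrite fsum_scal_r. ring.
    + intros c Hc. destruct (Nat.eq_dec c i); [lia|reflexivity].
  - rewrite IHK by lia. ring.
Qed.

Lemma Rabs_le_inv a b : Rabs a <= b -> - b <= a <= b.
Proof. unfold Rabs; destruct (Rcase_abs a); lra. Qed.

Lemma series_unique u l : infinite_sum u l -> series u = l.
Proof.
  intros H. unfold series.
  destruct (excluded_middle_informative _) as [H1|H1].
  - destruct (constructive_indefinite_description _ H1) as [l' Hl']. simpl.
    exact (UL_sequence _ _ _ Hl' H).
  - exfalso; apply H1; eauto.
Qed.

Lemma Un_cv_ext U V l : (forall n, U n = V n) -> Un_cv U l -> Un_cv V l.
Proof. intros H. replace V with U; auto. apply functional_extensionality; auto. Qed.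

Lemma Un_cv_const c : Un_cv (fun _ => c) c.
Proof. intros e He; exists 0%nat; intros; unfold Rdist; rewrite Rminus_diag, Rabs_R0; auto. Qed.

Lemma Un_cv_le_eventually U l c N : Un_cv U l -> (forall n, (N <= n)%nat -> U n <= c) -> l <= c.
Proof.
  intros H Hc. destruct (Rle_dec l c) as [|Hn]; auto. exfalso.
  destruct (H (l - c)) as [N' HN']; [lra|].
  specialize (HN' (max N N') (Nat.le_max_r _ _)).
  specialize (Hc (max N N') (Nat.le_max_l _ _)).
  unfold Rdist in HN'. apply Rabs_def2 in HN'. lra.
Qed.

Lemma infinite_sum_ext u w l : (forall n, u n = w n) -> infinite_sum u l -> infinite_sum w l.
Proof. intros H. replace w with u; auto. apply functional_extensionality; auto. Qed.

Lemma infinite_sum_zero : infinite_sum (fun _ => 0) 0.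
Proof.
  apply (Un_cv_ext (fun _ => 0)); [|apply Un_cv_const].
  intros n; induction n; simpl; lra.
Qed.

Lemma infinite_sum_plus u w l1 l2 : infinite_sum u l1 -> infinite_sum w l2 ->
  infinite_sum (fun n => u n + w n) (l1 + l2).
Proof.
  intros H1 H2. apply (Un_cv_ext (fun N => sum_f_R0 u N + sum_f_R0 w N)).
  - intros; rewrite plus_sum; auto.
  - apply CV_plus; auto.
Qed.

Lemma infinite_sum_scal u l c : infinite_sum u l -> infinite_sum (fun n => c * u n) (c * l).
Proof.
  intros H. apply (Un_cv_ext (fun N => c * sum_f_R0 u N)).
  - intros n; rewrite scal_sum. apply sum_eq; intros; ring.
  - apply CV_mult; auto. apply Un_cv_const.
Qed.

Lemma infinite_sum_le u w l1 l2 :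
  (forall n, u n <= w n) -> infinite_sum u l1 -> infinite_sum w l2 -> l1 <= l2.
Proof. intros H H1 H2. eapply Rle_cv_lim; [|exact H1|exact H2]. intros; apply sum_Rle; auto. Qed.

Lemma infinite_sum_tail u l j :
  infinite_sum u l -> infinite_sum (fun m => u (j + m)%nat) (l - fsum j u).
Proof.
  intros H. apply (Un_cv_ext (fun N => sum_f_R0 u (N + j) - fsum j u)).
  - intros N. rewrite sum_f_R0_fsum, Nat.add_comm, <- Nat.add_succ_r.
    induction N as [|N IHN].
    + rewrite Nat.add_1_r. simpl. rewrite Nat.add_0_r. ring.
    + rewrite Nat.add_succ_r. simpl. simpl in IHN. rewrite <- IHN. ring.
  - apply CV_minus; [apply (CV_shift' _ j), H|apply Un_cv_const].
Qed.

Lemma infinite_sum_dominated (w u : nat -> R) (lw c : R) :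
  infinite_sum w lw -> (forall n, Rabs (u n) <= c * w n) ->
  exists l, infinite_sum u l /\ Rabs l <= c * lw.
Proof.
  intros Hw Hu.
  assert (Hcw : infinite_sum (fun n => c * w n) (c * lw)) by (apply infinite_sum_scal; auto).
  destruct (Rseries_CV_comp (fun n => Rabs (u n)) (fun n => c * w n)) as [la Hla].
  { intros n; split; [apply Rabs_pos|apply Hu]. }
  { exists (c * lw); exact Hcw. }
  destruct (cv_cauchy_2 u) as [l Hl].
  { apply cauchy_abs, cv_cauchy_1. exists la; exact Hla. }
  exists l; split; [exact Hl|].
  exact (sum_cv_maj (fun n => c * w n) (fun n _ => u n) 0 l (c * lw) Hl Hcw Hu).
Qed.


Lemma nonneg_bounded_summable u B :
  (forall n, 0 <= u n) -> (forall N, sum_f_R0 u N <= B) -> exists l, infinite_sum u l.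
Proof.
  intros H0 HB.
  destruct (growing_cv (fun N => sum_f_R0 u N)) as [l Hl].
  - intros n; simpl; specialize (H0 (S n)); lra.
  - exists B; intros x [i ->]; auto.
  - exists l; exact Hl.
Qed.

Lemma sum_f_R0_swap (a : nat -> nat -> R) N M :
  sum_f_R0 (fun m => sum_f_R0 (fun n => a n m) N) M =
  sum_f_R0 (fun n => sum_f_R0 (fun m => a n m) M) N.
Proof. induction M; simpl; auto. rewrite IHM, <- plus_sum. reflexivity. Qed.

Lemma Un_cv_sum_f_R0 (U : nat -> nat -> R) (L : nat -> R) M :
  (forall m, Un_cv (fun N => U N m) (L m)) ->
  Un_cv (fun N => sum_f_R0 (fun m => U N m) M) (sum_f_R0 L M).
Proof. intros H; induction M; simpl; auto. apply CV_plus; auto. Qed.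

Section Tonelli.
Variable a : nat -> nat -> R.
Variable r : nat -> R.
Variable S : R.
Hypothesis a_nonneg : forall n m, 0 <= a n m.
Hypothesis rows : forall n, infinite_sum (a n) (r n).
Hypothesis total : infinite_sum r S.

(* Row sums are nonnegative, and an entry is bounded by its row sum, so the
   columns are dominated by r and converge. *)
Lemma row_sum_nonneg n : 0 <= r n.
Proof.
  apply Rle_trans with (sum_f_R0 (a n) 0); [simpl; auto|].
  apply sum_incr; [apply rows|auto].
Qed.

Lemma column_summable m : {c | infinite_sum (fun n => a n m) c}.
Proof.
  apply (Rseries_CV_comp _ r); [|exists S; exact total].
  intros n; split; auto.
  apply Rle_trans with (sum_f_R0 (a n) m); [|apply sum_incr; [apply rows|auto]].
  destruct m; simpl; [lra|]. pose proof (cond_pos_sum (a n) m (a_nonneg n)). lra.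
Qed.

Let col m := proj1_sig (column_summable m).

Lemma col_sum m : infinite_sum (fun n => a n m) (col m).
Proof. exact (proj2_sig (column_summable m)). Qed.

Lemma col_partial_le M : sum_f_R0 col M <= S.
Proof.
  apply (Un_cv_le_eventually (fun N => sum_f_R0 (fun m => sum_f_R0 (fun n => a n m) N) M) _ _ 0).
  - apply Un_cv_sum_f_R0; intros m; apply col_sum.
  - intros N _. rewrite sum_f_R0_swap.
    apply Rle_trans with (sum_f_R0 r N); [|apply sum_incr; auto using row_sum_nonneg].
    apply sum_Rle; intros n _. apply sum_incr; [apply rows|auto].
Qed.

(* The column total S' satisfies S' <= S, and S <= S' by the same argument
   with rows and columns exchanged. *)
Lemma tonelli : exists c, (forall m, infinite_sum (fun n => a n m) (c m)) /\ infinite_sum c S.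
Proof.
  assert (Hc0 : forall m, 0 <= col m).
  { intros m. apply Rle_trans with (sum_f_R0 (fun n => a n m) 0); [simpl; auto|].
    apply sum_incr; [apply col_sum|auto]. }
  destruct (nonneg_bounded_summable col S Hc0 col_partial_le) as [S' HS'].
  assert (S' <= S) by (apply (Un_cv_le_eventually _ _ _ 0 HS'); auto using col_partial_le).
  assert (S <= S').
  { apply (Un_cv_le_eventually _ _ _ 0 total). intros N _.
    apply (Un_cv_le_eventually (fun M => sum_f_R0 (fun n => sum_f_R0 (fun m => a n m) M) N) _ _ 0).
    - apply Un_cv_sum_f_R0; intros n; apply rows.
    - intros M _. rewrite <- sum_f_R0_swap.
      apply Rle_trans with (sum_f_R0 col M); [|apply sum_incr; auto].
      apply sum_Rle; intros m _. apply sum_incr; [apply col_sum|auto]. }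
  exists col; split; [exact col_sum|]. replace S with S' by lra; exact HS'.
Qed.

End Tonelli.


Fixpoint swap_at (d : nat) (l : list nat) : list nat :=
  match d with
  | O => match l with a :: b :: t => b :: a :: t | _ => l end
  | S d' => match l with a :: t => a :: swap_at d' t | nil => nil end
  end.

Lemma swap_at_sumV d : forall l, sumV (swap_at d l) = sumV l.
Proof.
  unfold sumV; induction d; intros l.
  - destruct l as [|a [|b t]]; simpl; lia.
  - destruct l; simpl; auto.
Qed.

Lemma swap_at_nth d : forall l, (S d < length l)%nat -> nth (S d) (swap_at d l) 0%nat = nth d l 0%nat.
Proof.
  induction d; intros l H.
  - destruct l as [|a [|b t]]; simpl in *; try lia; reflexivity.
  - destruct l as [|a t]; simpl in *; try lia. apply IHd. lia.
Qed.

(* Functions are only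
   evaluated on vectors of length K whose entries all have positive
   probability ("supported" vectors), and all statistics we integrate are
   bounded there; this is what makes the iterated series converge. *)
Section IidExpectation.
Variable pi : nat -> R.
Hypothesis pi_nonneg : forall n, 0 <= pi n.
Hypothesis pi_total : infinite_sum pi 1.

Definition supported (vs : list nat) : Prop := Forall (fun x => 0 < pi x) vs.

Definition stat_bounded_by (K : nat) (f : list nat -> R) (B : R) : Prop :=
  forall vs, length vs = K -> supported vs -> Rabs (f vs) <= B.

Definition stat_bounded (K : nat) (f : list nat -> R) : Prop := exists B, 0 <= B /\ stat_bounded_by K f B.

Lemma pi_zero_or_pos n : pi n = 0 \/ 0 < pi n.
Proof. destruct (pi_nonneg n); auto. Qed.

Lemma stat_bounded_by_cons k f B n : 0 < pi n -> stat_bounded_by (S k) f B -> stat_bounded_by k (fun l => f (n :: l)) B.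
Proof. intros Hn H vs Hl Hs. apply H; simpl; auto. constructor; auto. Qed.

Lemma stat_bounded_cons k f n : 0 < pi n -> stat_bounded (S k) f -> stat_bounded k (fun l => f (n :: l)).
Proof. intros Hn [B [HB Hf]]. exists B; split; auto. apply stat_bounded_by_cons; auto. Qed.

Lemma stat_bounded_plus K f g : stat_bounded K f -> stat_bounded K g -> stat_bounded K (fun vs => f vs + g vs).
Proof.
  intros [B [HB Hf]] [C [HC Hg]]. exists (B + C); split; [lra|].
  intros vs Hl Hs. eapply Rle_trans; [apply Rabs_triang|]. apply Rplus_le_compat; auto.
Qed.

Lemma stat_bounded_scal K f c : stat_bounded K f -> stat_bounded K (fun vs => c * f vs).
Proof.
  intros [B [HB Hf]]. exists (Rabs c * B); split; [apply Rmult_le_pos; auto using Rabs_pos|].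
  intros vs Hl Hs. rewrite Rabs_mult. apply Rmult_le_compat_l; auto using Rabs_pos.
Qed.

Lemma Eiid_step_dominated k f B : 0 <= B ->
  (forall n, 0 < pi n -> Rabs (Eiid pi k (fun l => f (n :: l))) <= B) ->
  exists l, infinite_sum (fun n => pi n * Eiid pi k (fun l => f (n :: l))) l /\ Rabs l <= B.
Proof.
  intros HB Hf.
  destruct (infinite_sum_dominated pi (fun n => pi n * Eiid pi k (fun l => f (n :: l))) 1 B pi_total)
    as [l [Hl Hlb]]; [|exists l; split; auto; lra].
  intros n. destruct (pi_zero_or_pos n) as [Hz|Hp].
  - rewrite Hz, Rmult_0_l, Rabs_R0; lra.
  - rewrite Rabs_mult, Rabs_pos_eq by lra. rewrite Rmult_comm.
    apply Rmult_le_compat_r; [lra|auto].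
Qed.

Lemma Eiid_bound K : forall f B, 0 <= B -> stat_bounded_by K f B -> Rabs (Eiid pi K f) <= B.
Proof.
  induction K; intros f B HB Hf; simpl.
  - apply Hf; simpl; auto. constructor.
  - destruct (Eiid_step_dominated K f B HB) as [l [Hl Hlb]].
    + intros n Hn. apply IHK; auto. apply stat_bounded_by_cons; auto.
    + rewrite (series_unique _ _ Hl). exact Hlb.
Qed.

Lemma Eiid_cons_sum k f : stat_bounded (S k) f ->
  infinite_sum (fun n => pi n * Eiid pi k (fun l => f (n :: l))) (Eiid pi (S k) f).
Proof.
  intros [B [HB Hf]].
  destruct (Eiid_step_dominated k f B HB) as [l [Hl _]].
  - intros n Hn. apply Eiid_bound; auto. apply stat_bounded_by_cons; auto.
  - simpl. rewrite (series_unique _ _ Hl). exact Hl.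
Qed.

Lemma Eiid_ext K : forall f g,
  (forall vs, length vs = K -> supported vs -> f vs = g vs) -> Eiid pi K f = Eiid pi K g.
Proof.
  induction K; intros f g H; simpl.
  - apply H; simpl; auto. constructor.
  - f_equal. apply functional_extensionality; intros n.
    destruct (pi_zero_or_pos n) as [Hz|Hp]; [rewrite Hz; ring|].
    f_equal. apply IHK. intros vs Hl Hs. apply H; simpl; auto. constructor; auto.
Qed.

Lemma Eiid_const K c : Eiid pi K (fun _ => c) = c.
Proof.
  induction K; simpl; auto.
  apply series_unique. apply (infinite_sum_ext (fun n => c * pi n)).
  - intros n; rewrite IHK; ring.
  - pose proof (infinite_sum_scal _ _ c pi_total) as E. rewrite Rmult_1_r in E. exact E.
Qed.

Lemma Eiid_le K : forall f g, stat_bounded K f -> stat_bounded K g ->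
  (forall vs, length vs = K -> supported vs -> f vs <= g vs) -> Eiid pi K f <= Eiid pi K g.
Proof.
  induction K; intros f g Hf Hg H.
  - simpl; apply H; simpl; auto. constructor.
  - eapply infinite_sum_le; [|apply Eiid_cons_sum, Hf|apply Eiid_cons_sum, Hg].
    intros n. destruct (pi_zero_or_pos n) as [Hz|Hp]; [rewrite Hz; lra|].
    apply Rmult_le_compat_l; [lra|]. apply IHK; try (apply stat_bounded_cons; auto).
    intros vs Hl Hs. apply H; simpl; auto. constructor; auto.
Qed.

Lemma Eiid_plus K : forall f g, stat_bounded K f -> stat_bounded K g ->
  Eiid pi K (fun vs => f vs + g vs) = Eiid pi K f + Eiid pi K g.
Proof.
  induction K; intros f g Hf Hg; [reflexivity|].
  apply series_unique.
  apply (infinite_sum_ext (fun n => pi n * Eiid pi K (fun l => f (n :: l))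
                                   + pi n * Eiid pi K (fun l => g (n :: l)))).
  - intros n. destruct (pi_zero_or_pos n) as [Hz|Hp]; [rewrite Hz; ring|].
    rewrite IHK by (apply stat_bounded_cons; auto). ring.
  - apply infinite_sum_plus; apply Eiid_cons_sum; auto.
Qed.

Lemma Eiid_scal K : forall f c, stat_bounded K f -> Eiid pi K (fun vs => c * f vs) = c * Eiid pi K f.
Proof.
  induction K; intros f c Hf; [reflexivity|].
  apply series_unique.
  apply (infinite_sum_ext (fun n => c * (pi n * Eiid pi K (fun l => f (n :: l))))).
  - intros n. destruct (pi_zero_or_pos n) as [Hz|Hp]; [rewrite Hz; ring|].
    rewrite IHK by (apply stat_bounded_cons; auto). ring.
  - apply infinite_sum_scal, Eiid_cons_sum, Hf.
Qed.

Lemma stat_bounded_fsum K M (F : nat -> list nat -> R) :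
  (forall i, stat_bounded K (F i)) -> stat_bounded K (fun vs => fsum M (fun i => F i vs)).
Proof.
  intros HF. induction M; simpl; [|apply stat_bounded_plus; auto].
  exists 0; split; [lra|]. intros vs _ _; rewrite Rabs_R0; lra.
Qed.

Lemma stat_bounded_unit K f : (forall vs, 0 <= f vs <= 1) -> stat_bounded K f.
Proof.
  intros H. exists 1; split; [lra|]. intros vs _ _. rewrite Rabs_pos_eq; apply H.
Qed.

Lemma Eiid_fsum K M (F : nat -> list nat -> R) : (forall i, stat_bounded K (F i)) ->
  Eiid pi K (fun vs => fsum M (fun i => F i vs)) = fsum M (fun i => Eiid pi K (F i)).
Proof.
  intros HF. induction M; simpl; [apply Eiid_const|].
  rewrite Eiid_plus, IHM; auto using stat_bounded_fsum.
Qed.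

Lemma Eiid_abs_diff_le K f g h : stat_bounded K f -> stat_bounded K g -> stat_bounded K h ->
  (forall vs, length vs = K -> supported vs -> Rabs (f vs - g vs) <= h vs) ->
  Rabs (Eiid pi K f - Eiid pi K g) <= Eiid pi K h.
Proof.
  intros Hf Hg Hh H.
  assert (Hfg : stat_bounded K (fun vs => f vs + -1 * g vs)) by (apply stat_bounded_plus, stat_bounded_scal; auto).
  assert (Ediff : Eiid pi K (fun vs => f vs + -1 * g vs) = Eiid pi K f - Eiid pi K g)
    by (rewrite Eiid_plus, Eiid_scal by (auto using stat_bounded_scal); ring).
  apply Rabs_le; split.
  - rewrite <- Ediff.
    replace (- Eiid pi K h) with (Eiid pi K (fun vs => -1 * h vs)) by (rewrite Eiid_scal; auto; ring).
    apply Eiid_le; auto using stat_bounded_scal.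
    intros vs Hl Hs. pose proof (Rabs_le_inv _ _ (H vs Hl Hs)). lra.
  - rewrite <- Ediff. apply Eiid_le; auto.
    intros vs Hl Hs. pose proof (Rabs_le_inv _ _ (H vs Hl Hs)). lra.
Qed.

Lemma Eiid_nonneg K f : stat_bounded K f ->
  (forall vs, length vs = K -> supported vs -> 0 <= f vs) -> 0 <= Eiid pi K f.
Proof.
  intros Hf Hpos. rewrite <- (Eiid_const K 0).
  apply Eiid_le; auto. exists 0; split; [lra|]. intros vs _ _; rewrite Rabs_R0; lra.
Qed.

Lemma Eiid_marginal K : forall i (phi : nat -> R), (i < K)%nat ->
  Eiid pi K (fun vs => phi (nth i vs 0%nat)) = series (fun n => pi n * phi n).
Proof.
  induction K; intros i phi Hi; [lia|].
  destruct i as [|i]; simpl.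
  - f_equal. apply functional_extensionality; intros n. rewrite Eiid_const; auto.
  - rewrite (IHK i phi) by lia.
    set (X := series (fun n => pi n * phi n)).
    apply series_unique. apply (infinite_sum_ext (fun n => X * pi n)); [intros; ring|].
    pose proof (infinite_sum_scal _ _ X pi_total) as E. rewrite Rmult_1_r in E. exact E.
Qed.

(* Exchanging the first two coordinates does not change the expectation of a
   bounded nonnegative statistic: this is Tonelli for the double series. *)
Lemma Eiid_swap_head k f : stat_bounded (S (S k)) f ->
  (forall vs, length vs = S (S k) -> supported vs -> 0 <= f vs) ->
  Eiid pi (S (S k)) f = Eiid pi (S (S k)) (fun l => f (swap_at 0 l)).
Proof.
  intros Hf Hpos.
  set (E := fun n m => Eiid pi k (fun l => f (n :: m :: l))).
  set (a := fun n m => pi n * (pi m * E n m)).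
  set (r := fun n => pi n * Eiid pi (S k) (fun l => f (n :: l))).
  assert (Ha : forall n m, 0 <= a n m).
  { intros n m; unfold a.
    destruct (pi_zero_or_pos n) as [Hn|Hn]; [rewrite Hn; lra|].
    destruct (pi_zero_or_pos m) as [Hm|Hm]; [rewrite Hm; lra|].
    apply Rmult_le_pos; [lra|]. apply Rmult_le_pos; [lra|].
    apply Eiid_nonneg; [apply (stat_bounded_cons k (fun l => f (n :: l)) m Hm), stat_bounded_cons; auto|].
    intros vs Hl Hs. apply Hpos; simpl; auto. repeat constructor; auto. }
  assert (Hr : forall n, infinite_sum (a n) (r n)).
  { intros n; unfold a, r. destruct (pi_zero_or_pos n) as [Hn|Hn].
    - rewrite Hn. apply (infinite_sum_ext (fun _ => 0)); [intros; ring|].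
      rewrite Rmult_0_l. apply infinite_sum_zero.
    - apply infinite_sum_scal. apply (Eiid_cons_sum k (fun l => f (n :: l))), stat_bounded_cons; auto. }
  destruct (tonelli a r _ Ha Hr (Eiid_cons_sum (S k) f Hf)) as [c [Hc HcS]].
  rewrite <- (series_unique _ _ HcS). cbn [Eiid swap_at]. f_equal.
  apply functional_extensionality; intros x.
  destruct (pi_zero_or_pos x) as [Hx|Hx].
  - rewrite Hx, Rmult_0_l. apply (UL_sequence (fun N => sum_f_R0 (fun n => a n x) N)); [apply Hc|].
    apply (infinite_sum_ext (fun _ => 0)); [intros n; unfold a; rewrite Hx; ring|].
    apply infinite_sum_zero.
  - assert (Hcx : infinite_sum (fun n => pi n * E n x) (/ pi x * c x)).
    { apply (infinite_sum_ext (fun n => / pi x * a n x)).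
      - intros n; unfold a. field. lra.
      - apply infinite_sum_scal; auto. }
    unfold E in Hcx. rewrite (series_unique _ _ Hcx). field. lra.
Qed.

Lemma Eiid_swap d : forall K f, (d + 2 <= K)%nat -> stat_bounded K f ->
  (forall vs, length vs = K -> supported vs -> 0 <= f vs) ->
  Eiid pi K f = Eiid pi K (fun l => f (swap_at d l)).
Proof.
  induction d as [|d IHd]; intros K f HK Hf Hpos.
  - destruct K as [|[|k]]; [lia|lia|]. apply Eiid_swap_head; auto.
  - destruct K as [|K]; [lia|]. cbn [Eiid]. f_equal.
    apply functional_extensionality; intros n.
    destruct (pi_zero_or_pos n) as [Hn|Hn]; [rewrite Hn; ring|].
    f_equal. cbn [swap_at]. apply (IHd K (fun l => f (n :: l))); [lia|apply stat_bounded_cons; auto|].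
    intros vs Hl Hs. apply Hpos; simpl; auto. constructor; auto.
Qed.

Lemma Eiid_exchangeable K (G : nat -> nat -> R) B :
  (forall vs i, 0 <= G (nth i vs 0%nat) (sumV vs) <= B) ->
  forall i, (i < K)%nat ->
  Eiid pi K (fun vs => G (nth i vs 0%nat) (sumV vs)) = Eiid pi K (fun vs => G (nth 0 vs 0%nat) (sumV vs)).
Proof.
  intros HG i. induction i as [|i IHi]; intros Hi; auto.
  rewrite (Eiid_swap i K); [|lia| |intros vs _ _; apply HG].
  - rewrite <- IHi by lia. apply Eiid_ext. intros vs Hl _.
    rewrite swap_at_sumV, swap_at_nth by lia. reflexivity.
  - exists B; split; [pose proof (HG nil 0%nat); lra|].
    intros vs _ _. rewrite Rabs_pos_eq; apply HG.
Qed.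

Lemma Eiid_sum_marginals K (phi : nat -> R) : (forall n, 0 <= phi n <= 1) ->
  Eiid pi K (fun vs => fsum K (fun i => phi (nth i vs 0%nat))) = INR K * series (fun n => pi n * phi n).
Proof.
  intros Hphi. rewrite Eiid_fsum by (intros i; apply stat_bounded_unit; auto).
  rewrite <- fsum_const. apply fsum_ext. intros i Hi. apply Eiid_marginal, Hi.
Qed.

Lemma Eiid_sum_exchangeable K (G : nat -> nat -> R) :
  (forall vs i, 0 <= G (nth i vs 0%nat) (sumV vs) <= 1) ->
  Eiid pi K (fun vs => fsum K (fun i => G (nth i vs 0%nat) (sumV vs)))
  = INR K * Eiid pi K (fun vs => G (nth 0 vs 0%nat) (sumV vs)).
Proof.
  intros HG. rewrite Eiid_fsum by (intros i; apply stat_bounded_unit; auto).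
  rewrite <- fsum_const. apply fsum_ext. intros i Hi. apply (Eiid_exchangeable K G 1 HG i Hi).
Qed.

End IidExpectation.


Definition poisson (lam : R) (l : nat) : R := lam ^ l / INR (fact l) * exp (- lam).

Definition poisson_cdf (lam : R) (k : nat) : R := fsum (S k) (poisson lam).

Definition poisson_tail (lam : R) (j : nat) : R := 1 - fsum j (poisson lam).

Lemma poisson_total lam : infinite_sum (poisson lam) 1.
Proof.
  assert (He : exp_in lam (exp lam)) by (unfold exp; destruct (exist_exp lam); simpl; auto).
  apply (infinite_sum_scal _ _ (exp (- lam))) in He.
  rewrite <- exp_plus, Rplus_opp_l, exp_0 in He.
  eapply infinite_sum_ext; [|exact He]. intros n; unfold poisson, Rdiv; ring.
Qed.

Lemma poisson_succ lam l : INR (S l) * poisson lam (S l) = lam * poisson lam l.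
Proof.
  unfold poisson. rewrite fact_simpl, mult_INR. simpl pow.
  assert (0 < INR (fact l)) by apply lt_0_INR, lt_O_fact.
  assert (0 < INR (S l)) by (apply lt_0_INR; lia).
  field; lra.
Qed.

Section PoissonBounds.
Variable lam : R.
Hypothesis lam_nonneg : 0 <= lam.

Lemma poisson_nonneg l : 0 <= poisson lam l.
Proof.
  unfold poisson. apply Rmult_le_pos; [|left; apply exp_pos].
  unfold Rdiv; apply Rmult_le_pos; [apply pow_le; auto|].
  left; apply Rinv_0_lt_compat, lt_0_INR, lt_O_fact.
Qed.

Lemma poisson_partial_le1 j : fsum j (poisson lam) <= 1.
Proof.
  destruct j as [|j]; [simpl; lra|].
  rewrite <- sum_f_R0_fsum. apply sum_incr; [apply poisson_total|apply poisson_nonneg].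
Qed.

Lemma poisson_cdf_range k : 0 <= poisson_cdf lam k <= 1.
Proof. split; [apply fsum_nonneg, poisson_nonneg|apply poisson_partial_le1]. Qed.

Lemma poisson_tail_range j : 0 <= poisson_tail lam j <= 1.
Proof.
  unfold poisson_tail. pose proof (poisson_partial_le1 j).
  pose proof (fsum_nonneg j (poisson lam) poisson_nonneg). lra.
Qed.

(* lam F(k) = sum_{m<=k} (m+1) P(Z = m+1) <= (k+1) (F(k+1) - P(Z = 0)). *)
Lemma poisson_cdf_growth k :
  lam * poisson_cdf lam k <= INR (S k) * (poisson_cdf lam (S k) - poisson lam 0).
Proof.
  unfold poisson_cdf. induction k as [|k IHk].
  - cbn [fsum]. pose proof (poisson_succ lam 0). simpl INR in *. lra.
  - change (fsum (S (S k)) (poisson lam)) with (fsum (S k) (poisson lam) + poisson lam (S k)) in *.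
    change (fsum (S (S (S k))) (poisson lam))
      with (fsum (S k) (poisson lam) + poisson lam (S k) + poisson lam (S (S k))).
    pose proof (poisson_succ lam (S k)).
    assert (fsum 1 (poisson lam) <= fsum (S (S k)) (poisson lam))
      by (apply fsum_mono; [apply poisson_nonneg|lia]).
    simpl fsum in *. rewrite (S_INR (S k)) in *. lra.
Qed.

Lemma poisson_cdf_vs_mass k : (lam - INR (S k)) * poisson_cdf lam k <= lam * poisson lam k.
Proof.
  pose proof (poisson_cdf_growth k) as G. pose proof (poisson_succ lam k).
  unfold poisson_cdf in *.
  change (fsum (S (S k)) (poisson lam)) with (fsum (S k) (poisson lam) + poisson lam (S k)) in G.
  pose proof (poisson_nonneg 0). pose proof (pos_INR (S k)). nra.
Qed.

(* (m+1-lam) P(Z > m) <= lam P(Z = m), first for a finite window of the tail. *)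
Lemma poisson_window_vs_mass m t :
  (INR m + 1 - lam) * (poisson_cdf lam (m + t) - poisson_cdf lam m)
  + INR (m + t + 1) * poisson lam (m + t + 1) <= lam * poisson lam m.
Proof.
  induction t as [|t IHt].
  - rewrite Nat.add_0_r, Nat.add_1_r, poisson_succ. lra.
  - replace (m + S t)%nat with (S (m + t)) by lia.
    replace (S (m + t) + 1)%nat with (S (S (m + t))) by lia.
    replace (m + t + 1)%nat with (S (m + t)) in IHt by lia.
    change (poisson_cdf lam (S (m + t))) with (poisson_cdf lam (m + t) + poisson lam (S (m + t))).
    rewrite poisson_succ.
    rewrite S_INR, plus_INR in IHt.
    pose proof (poisson_nonneg (S (m + t))). pose proof (pos_INR t). nra.
Qed.

Lemma poisson_tail_vs_mass m : (1 - poisson_cdf lam m) * (INR m + 1 - lam) <= lam * poisson lam m.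
Proof.
  assert (Hcv : Un_cv (fun N => (INR m + 1 - lam) * (sum_f_R0 (poisson lam) N - poisson_cdf lam m))
                      ((INR m + 1 - lam) * (1 - poisson_cdf lam m))).
  { apply CV_mult; [apply Un_cv_const|]. apply CV_minus; [apply poisson_total|apply Un_cv_const]. }
  rewrite Rmult_comm. apply (Un_cv_le_eventually _ _ _ m Hcv). intros N HN.
  replace N with (m + (N - m))%nat by lia. rewrite sum_f_R0_fsum.
  pose proof (poisson_window_vs_mass m (N - m)).
  pose proof (pos_INR (m + (N - m) + 1)). pose proof (poisson_nonneg (m + (N - m) + 1)).
  unfold poisson_cdf in *. nra.
Qed.

End PoissonBounds.


Definition tail_indicator (j k : nat) : R := if Nat.leb j k then 1 else 0.

(* Stein's method for the Poisson tail set {k >= j}: the centred indicator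
   h(k) = 1{k >= j} - P(Z >= j) is written as lam g(k+1) - k g(k), where
   g(k+1) = (sum_{m<=k} P(Z = m) h(m)) / (lam P(Z = k)) and g(0) = 0. *)
Definition centred_tail (lam : R) (j k : nat) : R := tail_indicator j k - poisson_tail lam j.

Definition stein_partial (lam : R) (j k : nat) : R :=
  fsum (S k) (fun m => poisson lam m * centred_tail lam j m).

Definition stein_solution (lam : R) (j k : nat) : R :=
  match k with O => 0 | S k' => stein_partial lam j k' / (lam * poisson lam k') end.

Lemma div_le X D C : 0 < D -> X <= C * D -> X / D <= C.
Proof. intros HD H. unfold Rdiv. apply (Rmult_le_reg_r D); auto. rewrite Rmult_assoc, Rinv_l; lra. Qed.

Section SteinSolution.
Variable lam : R.
Variable j : nat.
Hypothesis lam_pos : 0 < lam.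

Let lam_nonneg : 0 <= lam. Proof. lra. Qed.

(* For lam > 0 all masses are positive, so g is well defined. *)
Lemma poisson_pos l : 0 < poisson lam l.
Proof.
  unfold poisson. apply Rmult_lt_0_compat; [|apply exp_pos].
  apply Rdiv_lt_0_compat; [apply pow_lt; auto|]. apply lt_0_INR, lt_O_fact.
Qed.

(* Below the threshold the partial sums only see the constant -P(Z >= j). *)
Lemma stein_partial_below k : (k < j)%nat -> stein_partial lam j k = - poisson_tail lam j * poisson_cdf lam k.
Proof.
  unfold stein_partial, centred_tail, tail_indicator, poisson_cdf.
  induction k as [|k IHk]; intros H.
  - cbn [fsum]. rewrite (proj2 (Nat.leb_gt j 0) H). ring.
  - cbn [fsum] in *. rewrite IHk by lia. rewrite (proj2 (Nat.leb_gt j (S k)) H). ring.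
Qed.

Lemma stein_partial_above k : (j <= S k)%nat ->
  stein_partial lam j k = - fsum j (poisson lam) * (1 - poisson_cdf lam k).
Proof.
  induction k as [|k IHk]; intros H.
  - destruct j as [|[|j']]; try lia;
      unfold stein_partial, centred_tail, tail_indicator, poisson_tail, poisson_cdf; cbn; ring.
  - destruct (Nat.eq_dec j (S (S k))) as [E|E].
    + rewrite stein_partial_below by lia. unfold poisson_tail, poisson_cdf. rewrite E. ring.
    + unfold stein_partial in *. cbn [fsum] in *. rewrite IHk by lia.
      unfold centred_tail, tail_indicator. rewrite (proj2 (Nat.leb_le j (S k))) by lia.
      unfold poisson_tail, poisson_cdf. cbn [fsum]. ring.
Qed.

Lemma stein_equation k :
  lam * stein_solution lam j (S k) - INR k * stein_solution lam j k = centred_tail lam j k.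
Proof.
  destruct k as [|k].
  - unfold stein_solution, stein_partial. cbn [fsum]. pose proof (poisson_pos 0). simpl INR. field. lra.
  - unfold stein_solution.
    change (stein_partial lam j (S k))
      with (stein_partial lam j k + poisson lam (S k) * centred_tail lam j (S k)).
    pose proof (poisson_succ lam k) as HS. pose proof (poisson_pos k). pose proof (poisson_pos (S k)).
    assert (0 < INR (S k)) by (apply lt_0_INR; lia).
    rewrite <- HS. field. lra.
Qed.

Lemma stein_increment_below k : (S k < j)%nat ->
  Rabs (stein_solution lam j (S (S k)) - stein_solution lam j (S k)) <= (1 - poisson lam 0) / lam.
Proof.
  intros Hj. unfold stein_solution.
  rewrite !stein_partial_below by lia.
  pose proof (poisson_succ lam k) as HS.
  pose proof (poisson_pos k). pose proof (poisson_pos (S k)).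
  pose proof (poisson_tail_vs_mass lam lam_nonneg (S k)) as Tail.
  pose proof (poisson_cdf_growth lam lam_nonneg k) as Growth.
  pose proof (poisson_cdf_range lam lam_nonneg k). pose proof (poisson_cdf_range lam lam_nonneg (S k)).
  assert (HFm : poisson_cdf lam (S k) = poisson_cdf lam k + poisson lam (S k)) by reflexivity.
  assert (HP : 0 <= poisson_tail lam j <= 1 - poisson_cdf lam (S k)).
  { split; [apply poisson_tail_range; lra|]. unfold poisson_tail, poisson_cdf.
    assert (fsum (S (S k)) (poisson lam) <= fsum j (poisson lam))
      by (apply fsum_mono; [apply poisson_nonneg; lra|lia]). lra. }
  assert (Hm : 1 <= INR (S k)) by (apply (le_INR 1); lia).
  pose proof (poisson_nonneg lam lam_nonneg 0).
  set (a := poisson lam k) in *. set (b := poisson lam (S k)) in *. set (m := INR (S k)) in *.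
  set (Fk := poisson_cdf lam k) in *. set (Fm := poisson_cdf lam (S k)) in *.
  set (p0 := poisson lam 0) in *. set (P := poisson_tail lam j) in *.
  assert (Tail' : (1 - Fm) * (m - lam) <= lam * b).
  { replace ((1 - Fm) * (m - lam)) with ((1 - Fm) * (m + 1 - lam) - (1 - Fm)) by ring. lra. }
  set (N := m * Fm - lam * Fk).
  assert (HN : 0 <= N) by (unfold N; assert (0 <= m * p0) by (apply Rmult_le_pos; lra); lra).
  assert (E : - P * Fm / (lam * b) - - P * Fk / (lam * a) = - (P * N / (lam * m * b))).
  { unfold N. rewrite <- HS. field. repeat split; lra. }
  rewrite E, Rabs_Ropp, Rabs_pos_eq.
  - apply div_le; [apply Rmult_lt_0_compat; [apply Rmult_lt_0_compat|]; lra|].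
    replace ((1 - p0) / lam * (lam * m * b)) with ((1 - p0) * m * b) by (field; lra).
    apply Rle_trans with ((1 - Fm) * N); [apply Rmult_le_compat_r; lra|].
    unfold N. rewrite HFm in *.
    assert ((1 - (Fk + b)) * (m - lam) * Fk <= lam * b * Fk) by (apply Rmult_le_compat_r; lra).
    assert (b * (lam * Fk) <= b * (m * (Fk + b - p0))) by (apply Rmult_le_compat_l; lra).
    nra.
  - apply Rmult_le_pos; [apply Rmult_le_pos; lra|]. left; apply Rinv_0_lt_compat.
    apply Rmult_lt_0_compat; [apply Rmult_lt_0_compat|]; lra.
Qed.

Lemma stein_increment_above k : (j <= S k)%nat ->
  Rabs (stein_solution lam j (S (S k)) - stein_solution lam j (S k)) <= (1 - poisson lam 0) / lam.
Proof.
  intros Hj. unfold stein_solution.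
  rewrite !stein_partial_above by lia.
  pose proof (poisson_succ lam k) as HS.
  pose proof (poisson_pos k). pose proof (poisson_pos (S k)).
  pose proof (poisson_tail_vs_mass lam lam_nonneg (S k)) as Tail.
  pose proof (poisson_cdf_growth lam lam_nonneg k) as Growth.
  pose proof (poisson_cdf_vs_mass lam lam_nonneg k) as Mass.
  pose proof (poisson_cdf_range lam lam_nonneg k). pose proof (poisson_cdf_range lam lam_nonneg (S k)).
  assert (HFm : poisson_cdf lam (S k) = poisson_cdf lam k + poisson lam (S k)) by reflexivity.
  assert (HP : 0 <= fsum j (poisson lam) <= poisson_cdf lam k).
  { split; [apply fsum_nonneg, poisson_nonneg; lra|].
    apply fsum_mono; [apply poisson_nonneg; lra|lia]. }
  assert (Hm : 1 <= INR (S k)) by (apply (le_INR 1); lia).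
  pose proof (poisson_nonneg lam lam_nonneg 0).
  set (a := poisson lam k) in *. set (b := poisson lam (S k)) in *. set (m := INR (S k)) in *.
  set (Fk := poisson_cdf lam k) in *. set (Fm := poisson_cdf lam (S k)) in *.
  set (p0 := poisson lam 0) in *. set (P := fsum j (poisson lam)) in *.
  assert (Tail' : (1 - Fm) * (m - lam) <= lam * b).
  { replace ((1 - Fm) * (m - lam)) with ((1 - Fm) * (m + 1 - lam) - (1 - Fm)) by ring. lra. }
  set (N := (lam - m) * (1 - Fm) + lam * b).
  assert (HN : 0 <= N) by (unfold N; nra).
  assert (E : - P * (1 - Fm) / (lam * b) - - P * (1 - Fk) / (lam * a) = P * N / (lam * m * b)).
  { unfold N. rewrite <- HS, HFm. field. repeat split; lra. }
  rewrite E, Rabs_pos_eq.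
  - apply div_le; [apply Rmult_lt_0_compat; [apply Rmult_lt_0_compat|]; lra|].
    replace ((1 - p0) / lam * (lam * m * b)) with ((1 - p0) * m * b) by (field; lra).
    apply Rle_trans with (Fk * N); [apply Rmult_le_compat_r; lra|].
    unfold N. rewrite HFm in *.
    assert ((lam - m) * Fk * (1 - (Fk + b)) <= lam * a * (1 - (Fk + b))) by (apply Rmult_le_compat_r; lra).
    assert (b * (lam * Fk) <= b * (m * (Fk + b - p0))) by (apply Rmult_le_compat_l; lra).
    nra.
  - apply Rmult_le_pos; [apply Rmult_le_pos; lra|]. left; apply Rinv_0_lt_compat.
    apply Rmult_lt_0_compat; [apply Rmult_lt_0_compat|]; lra.
Qed.

Lemma stein_increment_bound k :
  Rabs (stein_solution lam j (S (S k)) - stein_solution lam j (S k)) <= (1 - poisson lam 0) / lam.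
Proof.
  destruct (Nat.lt_ge_cases (S k) j).
  - apply stein_increment_below; auto.
  - apply stein_increment_above; auto.
Qed.

End SteinSolution.


(* [binomial_expect q n phi] is E phi(X) for X ~ Binomial(n, q), obtained by
   conditioning on the outcome of one trial. *)
Fixpoint binomial_expect (q : R) (n : nat) (phi : nat -> R) : R :=
  match n with
  | O => phi 0%nat
  | S n' => q * binomial_expect q n' (fun k => phi (S k)) + (1 - q) * binomial_expect q n' phi
  end.

Lemma binomial_expect_ext q n phi psi :
  (forall k, phi k = psi k) -> binomial_expect q n phi = binomial_expect q n psi.
Proof. intros H. replace psi with phi; auto. apply functional_extensionality; auto. Qed.

Lemma binomial_expect_plus q n : forall phi psi,
  binomial_expect q n (fun k => phi k + psi k) = binomial_expect q n phi + binomial_expect q n psi.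
Proof. induction n; intros; simpl; auto. rewrite !IHn. ring. Qed.

Lemma binomial_expect_scal q n : forall phi c,
  binomial_expect q n (fun k => c * phi k) = c * binomial_expect q n phi.
Proof. induction n; intros; simpl; auto. rewrite !IHn. ring. Qed.

Lemma binomial_expect_const q n c : binomial_expect q n (fun _ => c) = c.
Proof. induction n; simpl; auto. rewrite IHn. ring. Qed.

Lemma binomial_expect_bound q n : 0 <= q <= 1 ->
  forall phi M, (forall k, Rabs (phi k) <= M) -> Rabs (binomial_expect q n phi) <= M.
Proof.
  intros Hq; induction n; intros phi M H; simpl; auto.
  eapply Rle_trans; [apply Rabs_triang|].
  rewrite !Rabs_mult, (Rabs_pos_eq q), (Rabs_pos_eq (1 - q)) by lra.
  pose proof (IHn (fun k => phi (S k)) M (fun k => H (S k))). pose proof (IHn phi M H). nra.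
Qed.

Lemma binomial_size_bias q n : forall g,
  binomial_expect q (S n) (fun k => INR k * g k) = INR (S n) * q * binomial_expect q n (fun k => g (S k)).
Proof.
  induction n as [|n IHn]; intros g; [simpl; ring|].
  change (binomial_expect q (S (S n)) (fun k => INR k * g k)) with
    (q * binomial_expect q (S n) (fun k => INR (S k) * g (S k))
     + (1 - q) * binomial_expect q (S n) (fun k => INR k * g k)).
  rewrite (binomial_expect_ext q (S n) (fun k => INR (S k) * g (S k))
             (fun k => INR k * g (S k) + g (S k))) by (intros; rewrite S_INR; ring).
  rewrite binomial_expect_plus, (IHn (fun k => g (S k))), IHn.
  change (binomial_expect q (S n) (fun k => g (S k))) with
    (q * binomial_expect q n (fun k => g (S (S k))) + (1 - q) * binomial_expect q n (fun k => g (S k))).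
  rewrite !S_INR. ring.
Qed.

(* Write the centred indicator through the Stein equation; the size-bias
   identity turns its binomial expectation into lam q E[g(Y+2) - g(Y+1)]. *)
Lemma binomial_poisson_tail q N lam j : 0 < q <= 1 -> (1 <= N)%nat -> lam = INR N * q ->
  Rabs (binomial_expect q N (tail_indicator j) - poisson_tail lam j) <= q * (1 - poisson lam 0).
Proof.
  intros Hq HN Hlam. destruct N as [|n]; [lia|].
  assert (Hl : 0 < lam) by (rewrite Hlam; apply Rmult_lt_0_compat; [apply lt_0_INR; lia|lra]).
  set (g := stein_solution lam j).
  assert (Stein : binomial_expect q (S n) (tail_indicator j) - poisson_tail lam j
               = binomial_expect q (S n) (fun k => lam * g (S k) + (-1) * (INR k * g k))).
  { rewrite (binomial_expect_ext q (S n) (fun k => lam * g (S k) + (-1) * (INR k * g k))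
               (fun k => tail_indicator j k + (- poisson_tail lam j))).
    - rewrite binomial_expect_plus, binomial_expect_const. ring.
    - intros k. pose proof (stein_equation lam j Hl k) as E. unfold centred_tail in E. unfold g. lra. }
  rewrite Stein, binomial_expect_plus, !binomial_expect_scal, binomial_size_bias.
  change (binomial_expect q (S n) (fun k => g (S k))) with
      (q * binomial_expect q n (fun k => g (S (S k))) + (1 - q) * binomial_expect q n (fun k => g (S k))).
  replace (lam * (q * binomial_expect q n (fun k => g (S (S k)))
                  + (1 - q) * binomial_expect q n (fun k => g (S k)))
           + -1 * (INR (S n) * q * binomial_expect q n (fun k => g (S k))))
    with (lam * q * (binomial_expect q n (fun k => g (S (S k))) + (-1) * binomial_expect q n (fun k => g (S k))))
    by (rewrite Hlam; ring).
  rewrite <- binomial_expect_scal, <- binomial_expect_plus.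
  rewrite Rabs_mult, Rabs_pos_eq by (apply Rmult_le_pos; lra).
  replace (q * (1 - poisson lam 0)) with (lam * q * ((1 - poisson lam 0) / lam)) by (field; lra).
  apply Rmult_le_compat_l; [apply Rmult_le_pos; lra|].
  apply binomial_expect_bound; [lra|]. intros k.
  replace (g (S (S k)) + -1 * g (S k)) with (g (S (S k)) - g (S k)) by ring.
  apply stein_increment_bound; auto.
Qed.


Definition draw_expect (vs : list nat) (l : list (list nat)) (psi : list nat -> R) : R :=
  fold_right Rplus 0 (map (fun s => draw_prob vs s * psi s) l).

Definition colour_prob (vs : list nat) (c : nat) : R := INR (nth c vs 0%nat) / INR (sumV vs).

Lemma fold_right_Rplus_app (l1 l2 : list R) :
  fold_right Rplus 0 (l1 ++ l2) = fold_right Rplus 0 l1 + fold_right Rplus 0 l2.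
Proof. induction l1; simpl; [ring|]. rewrite IHl1; ring. Qed.

Lemma fold_right_Rplus_seq (F : nat -> R) K : fold_right Rplus 0 (map F (seq 0 K)) = fsum K F.
Proof. induction K; [reflexivity|]. rewrite seq_S, map_app, fold_right_Rplus_app, IHK. simpl. ring. Qed.

Lemma draw_expect_ext vs l psi phi : (forall s, psi s = phi s) -> draw_expect vs l psi = draw_expect vs l phi.
Proof. intros H. replace phi with psi; auto. apply functional_extensionality; auto. Qed.

Lemma draw_expect_plus vs l psi phi :
  draw_expect vs l (fun s => psi s + phi s) = draw_expect vs l psi + draw_expect vs l phi.
Proof. unfold draw_expect; induction l; simpl; [ring|]. rewrite IHl; ring. Qed.

Lemma draw_expect_fsum vs l M (F : nat -> list nat -> R) :
  draw_expect vs l (fun s => fsum M (fun i => F i s)) = fsum M (fun i => draw_expect vs l (F i)).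
Proof.
  induction M; simpl.
  - unfold draw_expect; induction l; simpl; [ring|]. rewrite IHl; ring.
  - rewrite draw_expect_plus, IHM. reflexivity.
Qed.

Lemma draw_expect_flat vs D (psi : list nat -> R) cs :
  draw_expect vs (flat_map (fun c => map (cons c) D) cs) psi =
  fold_right Rplus 0 (map (fun c => colour_prob vs c * draw_expect vs D (fun s => psi (c :: s))) cs).
Proof.
  induction cs; simpl; auto.
  unfold draw_expect in *. rewrite map_app, fold_right_Rplus_app, IHcs. f_equal.
  rewrite map_map. simpl. clear IHcs. induction D as [|d D IHD]; simpl; [ring|]. rewrite IHD. unfold colour_prob. ring.
Qed.

Lemma draw_expect_succ vs K n psi :
  draw_expect vs (draw_seqs K (S n)) psi
  = fsum K (fun c => colour_prob vs c * draw_expect vs (draw_seqs K n) (fun s => psi (c :: s))).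
Proof. simpl. rewrite draw_expect_flat, fold_right_Rplus_seq. reflexivity. Qed.

Lemma fsum_nth vs : fsum (length vs) (fun c => INR (nth c vs 0%nat)) = INR (sumV vs).
Proof.
  induction vs; simpl length; [reflexivity|].
  rewrite fsum_shift. simpl nth. rewrite IHvs. unfold sumV; simpl fold_right. rewrite plus_INR. ring.
Qed.

Lemma colour_prob_total vs : (0 < sumV vs)%nat -> fsum (length vs) (colour_prob vs) = 1.
Proof.
  intros H. unfold colour_prob, Rdiv. rewrite fsum_scal_r, fsum_nth. apply Rinv_r.
  apply not_0_INR; lia.
Qed.

Lemma colour_count_binomial vs K i : length vs = K -> (0 < sumV vs)%nat -> (i < K)%nat ->
  forall n phi, draw_expect vs (draw_seqs K n) (fun s => phi (vtilde s i))
                = binomial_expect (colour_prob vs i) n phi.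
Proof.
  intros HK HV Hi n. induction n as [|n IHn]; intros phi.
  - unfold draw_expect; simpl. ring.
  - rewrite draw_expect_succ.
    rewrite (fsum_ext K _ (fun c => colour_prob vs c *
        (if Nat.eq_dec c i then binomial_expect (colour_prob vs i) n (fun k => phi (S k))
         else binomial_expect (colour_prob vs i) n phi))).
    + rewrite fsum_select by exact Hi. rewrite <- HK, colour_prob_total by exact HV. simpl. ring.
    + intros c _. f_equal. rewrite <- !IHn.
      destruct (Nat.eq_dec c i) as [E|E]; apply draw_expect_ext; intros s;
        unfold vtilde; simpl; destruct (Nat.eq_dec c i); try contradiction; reflexivity.
Qed.

Lemma Wplus_as_sum K j s : INR (Wplus K j s) = fsum K (fun i => tail_indicator j (vtilde s i)).
Proof.
  unfold Wplus, tail_indicator. induction K; [reflexivity|].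
  rewrite seq_S, filter_app, length_app, plus_INR, IHK. simpl.
  destruct (Nat.leb j (vtilde s K)); simpl; ring.
Qed.

Lemma condE_Wplus_binomial p K j vs : length vs = K -> (0 < sumV vs)%nat ->
  condE_Wplus p K j vs = fsum K (fun i => binomial_expect (colour_prob vs i) (ndraws p vs) (tail_indicator j)).
Proof.
  intros HK HV. unfold condE_Wplus.
  change (fold_right Rplus 0 (map (fun s => draw_prob vs s * INR (Wplus K j s)) (draw_seqs K (ndraws p vs))))
    with (draw_expect vs (draw_seqs K (ndraws p vs)) (fun s => INR (Wplus K j s))).
  rewrite (draw_expect_ext _ _ _ _ (Wplus_as_sum K j)), draw_expect_fsum.
  apply fsum_ext. intros i Hi. apply colour_count_binomial; auto.
Qed.

Lemma Int_part_INR m : Int_part (INR m) = Z.of_nat m.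
Proof.
  unfold Int_part. rewrite <- (tech_up (INR m) (Z.of_nat m + 1)).
  - ring.
  - rewrite plus_IZR, <- INR_IZR_INZ. simpl. lra.
  - rewrite plus_IZR, <- INR_IZR_INZ. simpl. lra.
Qed.

Lemma ndraws_spec p vs m : p * INR (sumV vs) = INR m -> INR (ndraws p vs) = p * INR (sumV vs).
Proof. intros H. unfold ndraws. rewrite H, Int_part_INR, Nat2Z.id. auto. Qed.


Definition approx_error (p : R) (a V : nat) : R := Rmin (p * INR a) 1 * (INR a / INR V).

Lemma one_minus_exp_le_min lam : 0 <= lam -> 1 - exp (- lam) <= Rmin lam 1.
Proof.
  intros H. pose proof (exp_ineq1_le (- lam)). pose proof (exp_pos (- lam)).
  apply Rmin_glb; lra.
Qed.

Lemma nth_le_sumV vs i : (nth i vs 0%nat <= sumV vs)%nat.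
Proof.
  revert i; induction vs; intros [|i]; simpl; unfold sumV in *; simpl; try lia.
  specialize (IHvs i). lia.
Qed.

Lemma ratio_unit (a V : nat) : (a <= V)%nat -> 0 <= INR a / INR V <= 1.
Proof.
  intros H. destruct (Nat.eq_dec V 0) as [->|HV].
  - replace a with 0%nat by lia. simpl. unfold Rdiv; rewrite Rmult_0_l. lra.
  - assert (0 < INR V) by (apply lt_0_INR; lia). split.
    + unfold Rdiv; apply Rmult_le_pos; [apply pos_INR|left; apply Rinv_0_lt_compat; lra].
    + apply div_le; auto. rewrite Rmult_1_l. apply le_INR; auto.
Qed.

Lemma approx_error_range p a V : 0 < p -> (a <= V)%nat -> 0 <= approx_error p a V <= 1.
Proof.
  intros Hp Hab. unfold approx_error. pose proof (ratio_unit a V Hab).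
  assert (0 <= Rmin (p * INR a) 1 <= 1).
  { split; [apply Rmin_glb; [apply Rmult_le_pos; [lra|apply pos_INR]|lra]|apply Rmin_r]. }
  nra.
Qed.

Lemma supported_nth_pos pi vs i : pi 0%nat = 0 -> supported pi vs -> (i < length vs)%nat ->
  (1 <= nth i vs 0%nat)%nat.
Proof.
  intros H0 Hs. revert i. induction Hs as [|x l Hx Hs IH]; intros i Hi; simpl in *; [lia|].
  destruct i; [destruct x; [rewrite H0 in Hx; lra|lia]|]. apply IH. lia.
Qed.

Lemma supported_sumV_pos pi vs : pi 0%nat = 0 -> supported pi vs -> (1 <= length vs)%nat ->
  (0 < sumV vs)%nat.
Proof.
  intros H0 Hs Hl. pose proof (nth_le_sumV vs 0). pose proof (supported_nth_pos pi vs 0 H0 Hs Hl). lia.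
Qed.

Lemma colour_error p j (a V N : nat) : 0 < p -> (1 <= a <= V)%nat -> INR N = p * INR V ->
  Rabs (binomial_expect (INR a / INR V) N (tail_indicator j) - poisson_tail (p * INR a) j)
  <= approx_error p a V.
Proof.
  intros Hp Ha HN.
  assert (HVr : 0 < INR V) by (apply lt_0_INR; lia).
  assert (Har : 1 <= INR a) by (apply (le_INR 1); lia).
  assert (Hq : 0 < INR a / INR V <= 1).
  { split; [apply Rdiv_lt_0_compat; lra|apply ratio_unit; lia]. }
  assert (HN1 : (1 <= N)%nat).
  { destruct N; [|lia]. simpl in HN. nra. }
  eapply Rle_trans.
  - apply (binomial_poisson_tail _ N); auto. rewrite HN. field. lra.
  - unfold approx_error. rewrite Rmult_comm. apply Rmult_le_compat_r; [lra|].
    unfold poisson. simpl pow. simpl INR. rewrite Rdiv_1_r, Rmult_1_l.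
    apply one_minus_exp_le_min. nra.
Qed.

Lemma conditional_error pi p K j vs : pi 0%nat = 0 -> (1 <= K)%nat -> 0 < p ->
  length vs = K -> supported pi vs -> (exists m, p * INR (sumV vs) = INR m) ->
  Rabs (condE_Wplus p K j vs - fsum K (fun i => poisson_tail (p * INR (nth i vs 0%nat)) j))
    <= fsum K (fun i => approx_error p (nth i vs 0%nat) (sumV vs)).
Proof.
  intros H0 HK Hp Hl Hs [m Hm].
  rewrite condE_Wplus_binomial, <- fsum_minus by (auto; apply (supported_sumV_pos pi); auto; lia).
  apply fsum_abs. intros i Hi. apply colour_error; auto.
  - split; [apply (supported_nth_pos pi); auto; lia|apply nth_le_sumV].
  - apply (ndraws_spec p vs m Hm).
Qed.

Lemma condE_Wplus_bounded pi p K j : pi 0%nat = 0 -> (1 <= K)%nat ->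
  stat_bounded pi K (condE_Wplus p K j).
Proof.
  intros H0 HK. exists (INR K); split; [apply pos_INR|]. intros vs Hl Hs.
  rewrite condE_Wplus_binomial, <- (Rmult_1_r (INR K)), <- fsum_const
    by (auto; apply (supported_sumV_pos pi); auto; lia).
  apply fsum_abs. intros i Hi. apply binomial_expect_bound.
  - apply ratio_unit, nth_le_sumV.
  - intros k. unfold tail_indicator. destruct (Nat.leb j k); rewrite ?Rabs_R1, ?Rabs_R0; lra.
Qed.

Lemma Qlaw_tail_sum pi p j : (forall n, 0 <= pi n) -> infinite_sum pi 1 -> 0 < p ->
  series (fun m => Qlaw pi p (j + m)) = series (fun n => pi n * poisson_tail (p * INR n) j).
Proof.
  intros H0 H1 Hp.
  set (a := fun n m => pi n * poisson (p * INR n) (j + m)).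
  set (r := fun n => pi n * poisson_tail (p * INR n) j).
  assert (Hlam : forall n, 0 <= p * INR n) by (intros; apply Rmult_le_pos; [lra|apply pos_INR]).
  assert (Ha : forall n m, 0 <= a n m) by (intros; apply Rmult_le_pos; auto; apply poisson_nonneg; auto).
  assert (Hr : forall n, infinite_sum (a n) (r n)).
  { intros n. apply infinite_sum_scal, infinite_sum_tail, poisson_total. }
  destruct (infinite_sum_dominated pi r 1 1 H1) as [S [HS _]].
  { intros n; unfold r. rewrite Rabs_mult, (Rabs_pos_eq (pi n)) by auto.
    pose proof (poisson_tail_range (p * INR n) (Hlam n) j). rewrite Rabs_pos_eq by lra.
    specialize (H0 n). nra. }
  destruct (tonelli a r S Ha Hr HS) as [c [Hc HcS]].
  rewrite (series_unique r S HS), <- (series_unique c S HcS). f_equal.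
  apply functional_extensionality; intros m. apply series_unique, Hc.
Qed.

Lemma Rabs_div_le x y z K : 0 < K -> Rabs (x - K * y) <= K * z -> Rabs (x / K - y) <= z.
Proof.
  intros HK H. replace (x / K - y) with ((x - K * y) / K) by (field; lra).
  unfold Rdiv. rewrite Rabs_mult, Rabs_inv, (Rabs_pos_eq K) by lra.
  apply (Rmult_le_reg_r K); auto. rewrite Rmult_assoc, Rinv_l; lra.
Qed.

Theorem mainTheorem3 (pi : nat -> R) (K : nat) (p : R)
  (Hpi : is_pos_int_law pi) (HK : (1 <= K)%nat) (Hp : 0 < p < 1)
  (HpV : forall vs : list nat, length vs = K -> Forall (fun x => 0 < pi x) vs ->
           exists m : nat, p * INR (sumV vs) = INR m) :
  forall j : nat,
    Rabs (E_Wplus pi p K j / INR K - series (fun m => Qlaw pi p (j + m))) <= E_rhs pi p K.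
Proof.
  intros j. destruct Hpi as [Hnn [H0 Htot]].
  set (C := fun vs => fsum K (fun i => poisson_tail (p * INR (nth i vs 0%nat)) j)).
  set (D := fun vs => fsum K (fun i => approx_error p (nth i vs 0%nat) (sumV vs))).
  assert (Htail : forall n, 0 <= poisson_tail (p * INR n) j <= 1)
    by (intros n; apply poisson_tail_range, Rmult_le_pos; [lra|apply pos_INR]).
  assert (Herr : forall vs i, 0 <= approx_error p (nth i vs 0%nat) (sumV vs) <= 1)
    by (intros vs i; apply approx_error_range; [lra|apply nth_le_sumV]).
  pose proof (Eiid_abs_diff_le pi Hnn Htot K (condE_Wplus p K j) C D
                (condE_Wplus_bounded pi p K j H0 HK)
                (stat_bounded_fsum pi K K _ (fun i => stat_bounded_unit pi K _ (fun vs => Htail _)))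
                (stat_bounded_fsum pi K K _ (fun i => stat_bounded_unit pi K _ (fun vs => Herr vs i))))
    as Bound.
  unfold C, D in Bound.
  rewrite (Eiid_sum_marginals pi Hnn Htot K (fun n => poisson_tail (p * INR n) j) Htail),
          (Eiid_sum_exchangeable pi Hnn Htot K (approx_error p) Herr) in Bound.
  rewrite Qlaw_tail_sum by (auto; lra). apply Rabs_div_le; [apply lt_0_INR; lia|].
  replace (E_rhs pi p K) with (Eiid pi K (fun vs => approx_error p (nth 0 vs 0%nat) (sumV vs)))
    by (apply Eiid_ext; auto; intros vs _ _; destruct vs; reflexivity).
  apply Bound. intros vs Hl Hs. apply (conditional_error pi); auto. lra.
Qed.
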